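(* Let $n\ge2$ and $\mathbf{F}\in\mathbb{R}^n$ with $F_k>0$ for all $k$ and $F_k\ge F_{k+1}$ for $2\le k\le n-1$. Let $U_i=\frac{i}{3/F_1+\sum_{k=2}^i1/F_k}$ for $1\le i\le n$, let $u$ be the least index in $\arg\max_{1\le i\le n}U_i$, and define $\boldsymbol\mu\in\mathbb{R}^{n-1}$ by $\mu_k=\frac13\big(1-\frac{U_u}{F_{k+1}}\big)$ for $1\le k\le u-1$ and $\mu_k=0$ for $u\le k\le n-1$. Then: (1) $\mu_k\ge0$ for all $1\le k\le n-1$; (2) $F_1\big(\frac13+\sum_{i=1}^{u-1}\mu_i\big)=F_k(1-3\mu_{k-1})=U_u$ for all $2\le k\le u$; (3) $F_k\le U_u$ for all $u+1\le k\le n$.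
   Context: Note $U_u=\frac{u}{3/F_1+\sum_{k=2}^u1/F_k}$. *)

From mathcomp Require Import all_boot all_order all_algebra.
Set Implicit Arguments. Unset Strict Implicit. Unset Printing Implicit Defensive.
Import Order.TTheory GRing.Theory Num.Theory.
Local Open Scope ring_scope.

(* Vectors F in R^n are represented 1-based as F : nat -> R, only F 1..F n matter. *)

Definition Uval (R : realFieldType) (F : nat -> R) (i : nat) : R :=
  i%:R / (3 / F 1%N + \sum_(2 <= k < i.+1) (F k)^-1).

Definition muval (R : realFieldType) (F : nat -> R) (u k : nat) : R :=
  if (1 <= k <= u.-1)%N then (1 - Uval F u / F k.+1) / 3 else 0.

From mathcomp Require Import all_boot all_order all_algebra.
From mathcomp Require Import ring lra zify.
Set Implicit Arguments. Unset Strict Implicit. Unset Printing Implicit Defensive.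
Import Order.TTheory GRing.Theory Num.Theory.
Local Open Scope ring_scope.

(* U_{i+1} is the mediant of U_i = i / D_i and F_{i+1} = 1 / F_{i+1}^-1, so it
   lies between them: if U increases at step i+1 then U_{i+1} < F_{i+1}, and if
   it does not increase then F_{i+1} <= U_i.  Applied at the first maximiser u
   (which beats U_{u-1} and is not beaten by U_{u+1}) and combined with the
   monotonicity of F_2, ..., F_n, this gives F_k >= U_u for 2 <= k <= u and
   F_k <= U_u for k > u.  The identities (2) are direct computations from the
   definition of mu, the sum telescoping against the denominator of U_u. *)

Lemma ltr_mediant_l_r (R : realFieldType) (a b c d : R) : 0 < b -> 0 < d ->
  a / b < (a + c) / (b + d) -> (a + c) / (b + d) < c / d.
Proof.
move=> b_gt0 d_gt0; set m := (a + c) / (b + d).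
have acE : a + c = m * b + m * d by rewrite -mulrDr divfK // gt_eqF // addr_gt0.
rewrite ltr_pdivrMr // ltr_pdivlMr //; lra.
Qed.

Lemma ler_mediant_r_l (R : realFieldType) (a b c d : R) : 0 < b -> 0 < d ->
  (a + c) / (b + d) <= a / b -> c / d <= a / b.
Proof.
move=> b_gt0 d_gt0; set m := (a + c) / (b + d) => le_m.
apply: le_trans (le_m); move: le_m.
have acE : a + c = m * b + m * d by rewrite -mulrDr divfK // gt_eqF // addr_gt0.
rewrite ler_pdivlMr // ler_pdivrMr //; lra.
Qed.

Definition Uden (R : realFieldType) (F : nat -> R) (i : nat) : R :=
  3 / F 1%N + \sum_(2 <= k < i.+1) (F k)^-1.

Section FirstMaximiser.

Variables (R : realFieldType) (n : nat) (F : nat -> R).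
Hypothesis F_gt0 : forall k, (1 <= k <= n)%N -> 0 < F k.

Lemma UvalE i : Uval F i = i%:R / Uden F i.
Proof. by []. Qed.

Lemma Uden_gt0 i : (1 <= i <= n)%N -> 0 < Uden F i.
Proof.
move=> i_in; rewrite /Uden ltr_wpDr ?divr_gt0 ?F_gt0 //; last by lia.
rewrite big_nat_cond; apply: sumr_ge0 => k /andP[/andP[k_ge2 k_lt] _].
by rewrite invr_ge0 ltW // F_gt0 //; lia.
Qed.

Lemma UdenS i : (1 <= i)%N -> Uden F i.+1 = Uden F i + (F i.+1)^-1.
Proof. by move=> i_ge1; rewrite /Uden big_nat_recr /= ?addrA //; lia. Qed.

Lemma UvalS i : (1 <= i)%N ->
  Uval F i.+1 = (i%:R + 1) / (Uden F i + (F i.+1)^-1).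
Proof. by move=> i_ge1; rewrite UvalE UdenS // -natr1. Qed.

Lemma F_recipK k : F k = 1 / (F k)^-1.
Proof. by rewrite div1r invrK. Qed.

Lemma ltr_UvalS_F i : (1 <= i < n)%N ->
  Uval F i < Uval F i.+1 -> Uval F i.+1 < F i.+1.
Proof.
move=> /andP[i_ge1 i_lt]; rewrite UvalS // UvalE [X in _ -> _ < X]F_recipK.
by apply: ltr_mediant_l_r; rewrite ?Uden_gt0 ?invr_gt0 ?F_gt0 //; lia.
Qed.

Lemma ler_F_Uval i : (1 <= i < n)%N ->
  Uval F i.+1 <= Uval F i -> F i.+1 <= Uval F i.
Proof.
move=> /andP[i_ge1 i_lt]; rewrite UvalS // UvalE [X in _ -> X <= _]F_recipK.
by apply: ler_mediant_r_l; rewrite ?Uden_gt0 ?invr_gt0 ?F_gt0 //; lia.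
Qed.

Hypothesis F_decr : forall k, (2 <= k <= n.-1)%N -> F k.+1 <= F k.

Lemma F_antitone j k : (2 <= j <= k)%N -> (k <= n)%N -> F k <= F j.
Proof.
move=> /andP[j_ge2]; elim: k => [|k IHk] le_jk le_kn; first by lia.
have [<- // | lt_jk] : j = k.+1 \/ (j < k.+1)%N by lia.
by apply: le_trans (IHk _ _); [apply: F_decr | |]; lia.
Qed.

Variable u : nat.
Hypothesis u_ge1 : (1 <= u)%N.
Hypothesis u_le_n : (u <= n)%N.

Lemma muval_sum : F 1%N * (3^-1 + \sum_(1 <= i < u) muval F u i) = Uval F u.
Proof.
rewrite big_nat_cond (eq_bigr (fun i => (1 - Uval F u / F i.+1) / 3)); last first.
  by move=> i /andP[i_in _]; rewrite /muval ifT //; lia.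
rewrite -big_nat_cond -mulr_suml sumrB sumr_const_nat -mulr_sumr.
have DuE : Uden F u = 3 / F 1%N + \sum_(1 <= i < u) (F i.+1)^-1.
  by rewrite /Uden big_add1.
have Du_neq0 : Uden F u != 0 by rewrite gt_eqF // Uden_gt0 // u_ge1 u_le_n.
have F1_neq0 : F 1%N != 0 by rewrite gt_eqF // F_gt0 //; lia.
rewrite UvalE DuE in Du_neq0 *.
set T := \sum_(1 <= i < u) (F i.+1)^-1 in Du_neq0 *.
rewrite -mulr_natr mul1r natrB //.
field; rewrite F1_neq0 /=.
have -> : 3 + T * F 1%N = (3 / F 1%N + T) * F 1%N by field.
by rewrite mulf_neq0.
Qed.

Lemma muval_pred k : (2 <= k <= u)%N ->
  F k * (1 - 3 * muval F u k.-1) = Uval F u.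
Proof.
move=> k_in; rewrite /muval ifT; last by lia.
have -> : k.-1.+1 = k by lia.
have Fk_neq0 : F k != 0 by rewrite gt_eqF // F_gt0 //; lia.
by field.
Qed.

Hypothesis Uval_le_u : forall i, (1 <= i <= n)%N -> Uval F i <= Uval F u.
Hypothesis Uval_lt_u : forall i, (1 <= i < u)%N -> Uval F i < Uval F u.

Lemma Uval_le_F k : (2 <= k <= u)%N -> Uval F u <= F k.
Proof.
move=> k_in; have Uu_le_Fu : Uval F u <= F u.
  have uE : u = u.-1.+1 by lia.
  rewrite uE; apply/ltW/ltr_UvalS_F; first by lia.
  by rewrite -uE Uval_lt_u //; lia.
by apply: le_trans Uu_le_Fu (F_antitone _ _); lia.
Qed.

Lemma F_le_Uval k : (u < k <= n)%N -> F k <= Uval F u.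
Proof.
move=> k_in; have Fu1_le_Uu : F u.+1 <= Uval F u.
  by apply: ler_F_Uval; [lia | apply: Uval_le_u; lia].
by apply: le_trans (F_antitone _ _) Fu1_le_Uu; lia.
Qed.

Lemma muval_ge0 k : 0 <= muval F u k.
Proof.
rewrite /muval; case: ifP => // k_in.
rewrite divr_ge0 // subr_ge0 ler_pdivrMr ?mul1r; first by apply: Uval_le_F; lia.
by rewrite F_gt0 //; lia.
Qed.

End FirstMaximiser.

Theorem lemma6 (R : realFieldType) (n : nat) (F : nat -> R) (u : nat) :
  (2 <= n)%N ->
  (forall k, (1 <= k <= n)%N -> 0 < F k) ->
  (forall k, (2 <= k <= n.-1)%N -> F k.+1 <= F k) ->
  (* u is the least index in argmax_{1<=i<=n} U_i *)
  (1 <= u <= n)%N ->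
  (forall i, (1 <= i <= n)%N -> Uval F i <= Uval F u) ->
  (forall i, (1 <= i < u)%N -> Uval F i < Uval F u) ->
  [/\ (forall k, (1 <= k <= n.-1)%N -> 0 <= muval F u k),
      (forall k, (2 <= k <= u)%N ->
         F 1%N * (3^-1 + \sum_(1 <= i < u) muval F u i) = Uval F u /\
         F k * (1 - 3 * muval F u k.-1) = Uval F u)
    & (forall k, (u.+1 <= k <= n)%N -> F k <= Uval F u)].
Proof.
move=> _ F_gt0 F_decr /andP[u_ge1 u_le_n] Uval_le_u Uval_lt_u; split.
- move=> k _; exact: (muval_ge0 F_gt0 F_decr u_ge1 u_le_n Uval_lt_u k).
- move=> k k_in; split; first exact: (muval_sum F_gt0 u_ge1 u_le_n).
  exact: (muval_pred F_gt0 u_ge1 u_le_n k_in).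
- exact: (F_le_Uval F_gt0 F_decr u_ge1 u_le_n Uval_le_u).
Qed.
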